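(* Let $C=\{c_1,\dots,c_m\}$ with $m\ge 2$, let $\mathcal{T}$ be a rooted ordered tree whose leaves are exactly the candidates of $C$, and let $F$ be the frequency matrix of the distribution $\mathcal{D}_{\mathrm{GS}}^{\mathcal{T}}$, with rows indexed by positions $1,\dots,m$ and columns indexed by candidates $c_1,\dots,c_m$. (1) If $\mathcal{T}=\mathrm{Flat}(c_1,\dots,c_m)$, then $F=\mathrm{AN}$, i.e., the entry of $F$ for position $i$ and candidate $c_j$ equals $\tfrac12\mathbb{1}_{i=j}+\tfrac12\mathbb{1}_{i=m-j+1}$. (2) If $m$ is a power of two and $\mathcal{T}=\mathrm{Bal}(c_1,\dots,c_m)$, then $F=\mathrm{UN}$, the $m\times m$ matrix with all entries $1/m$. (3) If $\mathcal{T}=\mathrm{CP}(c_1,\dots,c_m)$, then for each $j\in[m]$ and $i\in[m]$, the probability that $c_j$ appears in position $i$ in a vote sampled from $\mathcal{D}_{\mathrm{GS}}^{\mathcal{T}}$ is \[\frac{1}{2^j}\binom{j-1}{i-1}\mathbb{1}_{i\le j}+\frac{1}{2^j}\binom{j-1}{(i-1)-(m-j)}\mathbb{1}_{i>m-j}.\]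
   Context: A vote (preference order) over a finite candidate set $C$ is a total order on $C$; position 1 is the top. A vote distribution $\mathcal{D}$ assigns probabilities to all votes over $C$. Its frequency matrix is $\sum_v \mathcal{D}(v)\cdot \#(v)$, where $\#(v)$ is the $m\times m$ permutation matrix whose entry for position $i$ and candidate $c$ is $1$ iff $c$ is in position $i$ in $v$; equivalently, the entry for position $i$ and candidate $c$ is the probability that $c$ is in position $i$ in a vote sampled from $\mathcal{D}$. For a rooted ordered tree $\mathcal{T}$ whose leaves are the candidates, the frontier is the order of leaves from left to right; a vote is consistent with $\mathcal{T}$ if it is the frontier of the tree obtained by reversing the order of children of some set of internal nodes. $\mathcal{D}_{\mathrm{GS}}^{\mathcal{T}}$ is the uniform distribution over votes consistent with $\mathcal{T}$ (equivalently: reverse each internal node's children independently with probability $1/2$ and output the frontier). $\mathrm{Flat}(c_1,\dots,c_m)$ is the tree with a single internal node (the root) whose children from left to right are $c_1,\dots,c_m$. $\mathrm{Bal}(c_1,\dots,c_m)$ is the perfectly balanced binary tree with frontier $c_1,\dots,c_m$. $\mathrm{CP}(c_1,\dots,c_m)$ (caterpillar) has internal nodes $x_1,\dots,x_{m-1}$, root $x_1$; for $j\in[m-2]$, $x_j$ has left child $c_j$ and right child $x_{j+1}$, and $x_{m-1}$ has children $c_{m-1}$ (left) and $c_m$ (right). $\mathbb{1}$ denotes an indicator. *)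

From mathcomp Require Import all_boot all_order all_algebra.
Set Implicit Arguments. Unset Strict Implicit. Unset Printing Implicit Defensive.
Import Order.TTheory GRing.Theory Num.Theory.

(* Rooted ordered trees whose leaves are labelled by candidates.
   Candidates c_1..c_m are represented by the natural numbers 1..m. *)
Inductive tree : Type :=
| Leaf of nat
| Node of seq tree.

(* All frontiers of trees obtained from t by reversing the order of the
   children of some set of internal nodes (listed with repetitions; one entry
   per choice of the set of reversed nodes). *)
Fixpoint frontiers (t : tree) : seq (seq nat) :=
  match t with
  | Leaf c => [:: [:: c]]
  | Node ts =>
      let tuples := foldr (fun fs acc => [seq f :: a | f <- fs, a <- acc])
                          [:: [::]] (map frontiers ts) in
      [seq flatten tp | tp <- tuples] ++ [seq flatten (rev tp) | tp <- tuples]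
  end.

Definition consistent_votes (t : tree) : seq (seq nat) := undup (frontiers t).

(* Frequency matrix of D_GS^t (uniform distribution over consistent votes):
   entry for position i (1-indexed) and candidate c = probability that c is
   in position i. *)
Definition freqGS (t : tree) (i c : nat) : rat :=
  let V := consistent_votes t in
  (count (fun v => nth 0%N v i.-1 == c) V)%:R / (size V)%:R.

Definition Flat (m : nat) : tree := Node [seq Leaf j | j <- iota 1 m].

Fixpoint bal (k off : nat) : tree :=
  match k with
  | 0 => Leaf off
  | k'.+1 => Node [:: bal k' off; bal k' (off + 2 ^ k')]
  end.
Definition Bal (k : nat) : tree := bal k 1.

(* caterpillar starting at candidate j with k+2 leaves c_j..c_{j+k+1} *)
Fixpoint cp (j k : nat) : tree :=
  match k with
  | 0 => Node [:: Leaf j; Leaf j.+1]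
  | k'.+1 => Node [:: Leaf j; cp j.+1 k']
  end.
Definition CP (m : nat) : tree := cp 1 (m - 2).

(* Under D_GS^T a vote of a binary node is the concatenation of votes of its
   two subtrees, in one order or the other with probability 1/2, so the
   position counts of a node are determined by those of its children.  For
   the trees at hand [frontiers] is duplicate-free, hence D_GS^T is uniform on
   [frontiers].  For Flat the two votes are the identity and its reversal.
   For Bal the two halves are uniform by induction and occupy either half of
   the positions, so the whole vote is uniform.  For CP, the flip at x_j sends
   c_j to the first or last position of the block of the m - j + 1 leaves
   below x_j, and each of the j - 1 flips above puts one more leaf before that
   block with probability 1/2; this binomial shift is Pascal's rule applied
   once per level. *)

From mathcomp Require Import all_boot all_order all_algebra.
From mathcomp Require Import zify.
Set Implicit Arguments.
Unset Strict Implicit.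
Unset Printing Implicit Defensive.
Import Order.TTheory GRing.Theory Num.Theory.

Definition count_at (F : seq (seq nat)) (p c : nat) : nat :=
  count (fun v => nth 0 v p == c) F.

Definition votes_over (j n : nat) (F : seq (seq nat)) : Prop :=
  [/\ uniq F, 0 < size F, all (fun v => size v == n) F
    & all (all (fun c => j <= c < j + n)) F].

Section AllPairsCount.

Variables (S T R : eqType) (f : S -> T -> R) (a : pred R).

Lemma count_allpairs_l (b : pred S) s t :
  {in s & t, forall x y, a (f x y) = b x} ->
  count a [seq f x y | x <- s, y <- t] = count b s * size t.
Proof.
elim: s => //= x s IHs fb; rewrite count_cat count_map mulnDl.
rewrite IHs => [|x' y' x's yt]; last by apply: fb; rewrite // inE x's orbT.
congr (_ + _).
rewrite (@eq_in_count _ _ (fun=> b x)) => [|y yt]; last by rewrite /= fb ?mem_head.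
by case: (b x); rewrite ?count_predT ?count_pred0 ?mul1n.
Qed.

Lemma count_allpairs_r (b : pred T) s t :
  {in s & t, forall x y, a (f x y) = b y} ->
  count a [seq f x y | x <- s, y <- t] = size s * count b t.
Proof.
elim: s => //= x s IHs fb; rewrite count_cat count_map mulSn.
rewrite IHs => [|x' y' x's yt]; last by apply: fb; rewrite // inE x's orbT.
by congr (_ + _); apply: eq_in_count => y yt; rewrite /= fb ?mem_head.
Qed.
End AllPairsCount.

Definition node2_votes (F1 F2 : seq (seq nat)) : seq (seq nat) :=
  [seq f1 ++ f2 | f1 <- F1, f2 <- F2] ++ [seq f2 ++ f1 | f1 <- F1, f2 <- F2].

Lemma frontiers_node2 t1 t2 :
  frontiers (Node [:: t1; t2]) = node2_votes (frontiers t1) (frontiers t2).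
Proof.
rewrite /= allpairs1r allpairs_mapr !map_allpairs /node2_votes.
by congr (_ ++ _); apply: eq_allpairs => f1 f2 /=; rewrite cats0.
Qed.

Lemma size_node2_votes F1 F2 :
  size (node2_votes F1 F2) = 2 * (size F1 * size F2).
Proof. by rewrite size_cat !size_allpairs addnn mul2n. Qed.

Lemma count_at_node2 n1 n2 F1 F2 :
  all (fun v => size v == n1) F1 -> all (fun v => size v == n2) F2 ->
  forall p c, count_at (node2_votes F1 F2) p c =
    (if p < n1 then count_at F1 p c * size F2 else size F1 * count_at F2 (p - n1) c)
  + (if p < n2 then size F1 * count_at F2 p c else count_at F1 (p - n2) c * size F2).
Proof.
move=> /allP szF1 /allP szF2 p c; rewrite /count_at count_cat.
congr (_ + _); case: ifP => p_lt.
- by apply: count_allpairs_l => x y /szF1/eqP x_sz _; rewrite nth_cat x_sz p_lt.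
- by apply: count_allpairs_r => x y /szF1/eqP x_sz _; rewrite nth_cat x_sz p_lt.
- by apply: count_allpairs_r => x y _ /szF2/eqP y_sz; rewrite nth_cat y_sz p_lt.
- by apply: count_allpairs_l => x y _ /szF2/eqP y_sz; rewrite nth_cat y_sz p_lt.
Qed.

Lemma votes_over_node2 j n1 n2 F1 F2 :
  0 < n1 -> 0 < n2 -> votes_over j n1 F1 -> votes_over (j + n1) n2 F2 ->
  votes_over j (n1 + n2) (node2_votes F1 F2).
Proof.
move=> n1_gt0 n2_gt0 [uF1 F1_gt0 /allP szF1 /allP lbF1] [uF2 F2_gt0 /allP szF2 /allP lbF2].
have first_label x : x \in F1 -> j <= nth 0 x 0 < j + n1.
  by move=> x_in; apply: (allP (lbF1 x x_in)); rewrite mem_nth ?(eqP (szF1 x x_in)).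
have second_label y : y \in F2 -> j + n1 <= nth 0 y 0 < j + n1 + n2.
  by move=> y_in; apply: (allP (lbF2 y y_in)); rewrite mem_nth ?(eqP (szF2 y y_in)).
split.
- rewrite cat_uniq; apply/and3P; split.
  + apply: allpairs_uniq => // [[x y] [x' y']].
    move=> /allpairsP[[? ?] [/= x_in _ [-> ->]]] /allpairsP[[? ?] [/= x'_in _ [-> ->]]] /eqP.
    by rewrite eqseq_cat ?(eqP (szF1 _ x_in)) ?(eqP (szF1 _ x'_in)) // => /andP[/eqP-> /eqP->].
  + apply/hasPn => _ /allpairsP[[x y] [/= x_in y_in ->]].
    apply/allpairsP => -[[x' y'] [/= x'_in y'_in]] /(congr1 (nth 0 ^~ 0)).
    rewrite !nth_cat (eqP (szF2 _ y_in)) (eqP (szF1 _ x'_in)) n1_gt0 n2_gt0 => eq_head.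
    by have := first_label _ x'_in; have := second_label _ y_in; rewrite eq_head; lia.
  + apply: allpairs_uniq => // [[x y] [x' y']].
    move=> /allpairsP[[? ?] [/= _ y_in [-> ->]]] /allpairsP[[? ?] [/= _ y'_in [-> ->]]] /eqP.
    by rewrite eqseq_cat ?(eqP (szF2 _ y_in)) ?(eqP (szF2 _ y'_in)) // => /andP[/eqP-> /eqP->].
- by rewrite size_node2_votes !muln_gt0 F1_gt0 F2_gt0.
- apply/allP => v; rewrite mem_cat => /orP[] /allpairsP[[x y] [/= x_in y_in ->]];
  by rewrite size_cat (eqP (szF1 _ x_in)) (eqP (szF2 _ y_in)) // addnC.
- apply/allP => v; rewrite mem_cat => /orP[] /allpairsP[[x y] [/= x_in y_in ->]];
  by rewrite all_cat (sub_all _ (lbF1 _ x_in)) ?(sub_all _ (lbF2 _ y_in)) // => c /=; lia.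
Qed.

Lemma frontiers_flat s : frontiers (Node [seq Leaf c | c <- s]) = [:: s; rev s].
Proof.
have tuples : foldr (fun fs acc => [seq f :: a | f <- fs, a <- acc]) [:: [::]]
    [seq frontiers t | t <- [seq Leaf c | c <- s]] = [:: [seq [:: c] | c <- s]].
  by elim: s => //= c s ->.
by rewrite /= tuples /= flatten_seq1 -map_rev flatten_seq1.
Qed.

Lemma frontiers_bal k off :
  votes_over off (2 ^ k) (frontiers (bal k off)) /\
  forall p c, p < 2 ^ k ->
    count_at (frontiers (bal k off)) p c * 2 ^ k
    = size (frontiers (bal k off)) * (off <= c < off + 2 ^ k).
Proof.
elim: k off => [|k IHk] off.
  split=> [|[|p] c //= _]; first by split; rewrite //= addn1 leqnn ltnSn.
  by rewrite /count_at /=; lia.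
have [vo1 count1] := IHk off; have [vo2 count2] := IHk (off + 2 ^ k).
have [_ _ sz1 _] := vo1; have [_ _ sz2 _] := vo2.
rewrite [bal _ _]/= frontiers_node2 expnS mul2n -addnn.
split=> [|p c p_lt]; first by apply: votes_over_node2; rewrite ?expn_gt0.
have split_range : (off <= c < off + (2 ^ k + 2 ^ k)) =
  (off <= c < off + 2 ^ k) + (off + 2 ^ k <= c < off + 2 ^ k + 2 ^ k) :> nat by lia.
rewrite (count_at_node2 sz1 sz2) size_node2_votes split_range; case: ifP => p_small.
  by move: (count1 p c p_small) (count2 p c p_small); nia.
have p_shift : p - 2 ^ k < 2 ^ k by lia.
by move: (count1 _ c p_shift) (count2 _ c p_shift); nia.
Qed.

Definition bin_shift (d e p : nat) : nat := 'C(d, p - e) * (e <= p).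

Lemma bin_shift0 d p : bin_shift d 0 p = 'C(d, p).
Proof. by rewrite /bin_shift subn0 muln1. Qed.

Lemma bin_shiftS d e p : bin_shift d e.+1 p = (0 < p) * bin_shift d e p.-1.
Proof. by case: p => [|p]; rewrite /bin_shift ?muln0 // subSS ltnS mul1n. Qed.

Lemma bin_shift_pascal d e N p : e + d < N -> p <= N ->
  (0 < p) * bin_shift d e p.-1 + (p < N) * bin_shift d e p = bin_shift d.+1 e p.
Proof.
elim: e N p => [|e IHe] N [|p] edN p_le //=.
- by rewrite !bin_shift0 !bin0 (leq_ltn_trans (leq0n d) edN).
- rewrite !bin_shift0 binS mul1n addnC; congr (_ + _).
  case: (ltnP p.+1 N) => [_|N_le]; first by rewrite mul1n.
  by rewrite mul0n bin_small; lia.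
- by rewrite /bin_shift !muln0.
by rewrite !bin_shiftS /= !mul1n -(IHe N.-1 p); lia.
Qed.

(* [count_at F p (j + d)] counts the votes placing the (d+1)-th leaf at the
   (p+1)-th position; [cp_weight n d p] is the paper's numerator for these
   indices, the indicator [i <= j] being absorbed into ['C(d, p)]. *)
Definition cp_weight (n d p : nat) : nat := bin_shift d 0 p + bin_shift d (n.-1 - d) p.

Lemma cp_weightS n d p : d < n -> p <= n ->
  cp_weight n.+1 d.+1 p = (0 < p) * cp_weight n d p.-1 + (p < n) * cp_weight n d p.
Proof.
move=> d_lt p_le; rewrite /cp_weight (_ : n.+1.-1 - d.+1 = n.-1 - d); last by lia.
rewrite -!(@bin_shift_pascal d _ n p) //; lia.
Qed.

Lemma cp_weight0 n p : p <= n -> cp_weight n.+1 0 p = (p == 0) + (p == n).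
Proof. by move=> p_le; rewrite /cp_weight /bin_shift !bin0n; lia. Qed.

Lemma count_at_out n (Q : pred nat) F p c :
  all (fun v => size v == n) F -> all (all Q) F -> p < n -> ~~ Q c -> count_at F p c = 0.
Proof.
move=> /allP szF /allP lbF p_lt Qc; apply/eqP; rewrite -leqn0 leqNgt -has_count.
apply/hasPn => v v_in; apply: contraNneq Qc => <-.
by apply: (allP (lbF v v_in)); rewrite mem_nth ?(eqP (szF v v_in)).
Qed.

Definition caterpillar_votes (j n : nat) (F : seq (seq nat)) : Prop :=
  votes_over j n F /\ forall p d, p < n -> d < n ->
    count_at F p (j + d) * 2 ^ d.+1 = size F * cp_weight n d p.

Lemma caterpillar_votes_leaf j : caterpillar_votes j 1 (frontiers (Leaf j)).
Proof.
split=> [|[|//] [|//] _ _]; first by split; rewrite //= addn1 leqnn ltnSn.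
by rewrite /count_at /= !addn0 eqxx.
Qed.

Lemma caterpillar_votes_node j n t : 0 < n ->
  caterpillar_votes j.+1 n (frontiers t) ->
  caterpillar_votes j n.+1 (frontiers (Node [:: Leaf j; t])).
Proof.
move=> n_gt0 [vo counts]; have [_ _ sz lb] := vo.
have [vo_leaf _] := caterpillar_votes_leaf j.
split=> [|p d]; first by rewrite frontiers_node2 -add1n; apply: votes_over_node2; rewrite ?addn1.
rewrite !ltnS => p_le d_le.
have sz_leaf : all (fun v => size v == 1) (frontiers (Leaf j)) by [].
rewrite frontiers_node2 (count_at_node2 sz_leaf sz) size_node2_votes [size _]/= mul1n.
case: d d_le => [|d] d_le.
  have absent q : q < n -> count_at (frontiers t) q j = 0.
    by move=> q_lt; apply: count_at_out sz lb q_lt _; lia.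
  rewrite addn0 cp_weight0 // [size (frontiers (Leaf j))]/= mul1n.
  case: p p_le => [|p] p_le /=.
    by rewrite absent // n_gt0 /count_at /= eqxx; lia.
  rewrite subn1 /= absent //; case: ltnP => [p_lt|n_le]; first by rewrite absent //; lia.
  have -> : p.+1 - n = 0 by lia.
  by rewrite /count_at /= eqxx; lia.
have leaf_other q : count_at (frontiers (Leaf j)) q (j + d.+1) = 0.
  by rewrite /count_at; case: q => [|q] /=; rewrite ?nth_nil; lia.
rewrite !leaf_other cp_weightS // -addSnnS [size (frontiers (Leaf j))]/= mul1n expnS.
case: p p_le => [|p] p_le /=.
  by have := counts 0 d n_gt0 d_le; rewrite n_gt0; nia.
have := counts p d p_le d_le; rewrite subn1 /=.
case: ltnP => [p_lt|n_le]; last by nia.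
by have := counts p.+1 d p_lt d_le; nia.
Qed.

Lemma frontiers_cp j k : caterpillar_votes j k.+2 (frontiers (cp j k)).
Proof.
elim: k j => [|k IHk] j; apply: caterpillar_votes_node => //.
exact: caterpillar_votes_leaf.
Qed.

Local Open Scope ring_scope.

Lemma freqGS_frac t i c (a b : nat) :
  uniq (frontiers t) -> (0 < size (frontiers t))%N -> (0 < b)%N ->
  (count_at (frontiers t) i.-1 c * b = size (frontiers t) * a)%N ->
  freqGS t i c = a%:R / b%:R.
Proof.
move=> uF F_gt0 b_gt0 count_eq.
rewrite /freqGS /consistent_votes undup_id //; apply/eqP.
rewrite eqr_div ?pnatr_eq0 -?lt0n // -!natrM.
by rewrite -/(count_at _ _ _) count_eq mulnC.
Qed.

Lemma freqGS_Flat m : (2 <= m)%N ->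
  forall i j, (1 <= i <= m)%N -> (1 <= j <= m)%N ->
  freqGS (Flat m) i j = 2^-1 * (i == j)%:R + 2^-1 * (i == m - j + 1)%N%:R.
Proof.
move=> m_ge2 i j /andP[i_ge1 i_le] /andP[j_ge1 j_le].
have nth_id : nth 0 (iota 1 m) i.-1 = i by rewrite nth_iota; lia.
have nth_rev_id : nth 0 (rev (iota 1 m)) i.-1 = (m - i + 1)%N.
  by rewrite nth_rev size_iota ?nth_iota; lia.
rewrite (@freqGS_frac _ _ _ ((i == j) + (i == m - j + 1))%N 2) /Flat ?frontiers_flat //.
- by rewrite natrD mulrDl !(mulrC _ 2^-1).
- rewrite /= andbT inE; apply/eqP => /(congr1 (nth 0 ^~ 0)).
  by rewrite nth_rev size_iota ?nth_iota //; lia.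
by rewrite /count_at /= nth_id nth_rev_id; lia.
Qed.

Lemma freqGS_Bal m k : m = (2 ^ k)%N ->
  forall i j, (1 <= i <= m)%N -> (1 <= j <= m)%N -> freqGS (Bal k) i j = m%:R^-1.
Proof.
move=> -> i j /andP[i_ge1 i_le] /andP[j_ge1 j_le].
have [[uF F_gt0 _ _] counts] := frontiers_bal k 1.
rewrite /Bal (@freqGS_frac _ _ _ 1 (2 ^ k)) ?div1r ?expn_gt0 // counts; lia.
Qed.

Lemma freqGS_CP m : (2 <= m)%N ->
  forall i j, (1 <= i <= m)%N -> (1 <= j <= m)%N ->
  freqGS (CP m) i j
  = (2 ^+ j)^-1 * ('C(j - 1, i - 1)%:R * (i <= j)%N%:R)
    + (2 ^+ j)^-1 * ('C(j - 1, (i - 1) - (m - j))%:R * (m - j < i)%N%:R).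
Proof.
move=> m_ge2 i j /andP[i_ge1 i_le] /andP[j_ge1 j_le].
have [[uF F_gt0 _ _] counts] := frontiers_cp 1 (m - 2).
rewrite (_ : (m - 2).+2 = m) in counts; last by lia.
have weight : cp_weight m j.-1 i.-1 =
    ('C(j - 1, i - 1) * (i <= j) + 'C(j - 1, (i - 1) - (m - j)) * (m - j < i))%N.
  rewrite /cp_weight bin_shift0 /bin_shift -!subn1 (_ : m - 1 - (j - 1) = m - j)%N; last by lia.
  congr (_ + _ * _)%N; last by lia.
  by case: leqP => [_|j_lt]; rewrite ?muln1 // bin_small; lia.
rewrite /CP (@freqGS_frac _ _ _ (cp_weight m j.-1 i.-1) (2 ^ j)) ?expn_gt0 //.
  by rewrite weight natrD !natrM natrX mulrDl !(mulrC _ (2 ^+ j)^-1).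
by move: (counts i.-1 j.-1); rewrite add1n !prednK //; apply=> //; lia.
Qed.

Theorem theorem1 (m : nat) (hm : (2 <= m)%N) :
  (* (1) Flat gives AN *)
  (forall i j : nat, (1 <= i <= m)%N -> (1 <= j <= m)%N ->
     freqGS (Flat m) i j
     = 2^-1 * (i == j)%:R + 2^-1 * (i == m - j + 1)%N%:R)
  /\
  (* (2) Bal with m a power of two gives UN *)
  (forall k : nat, m = (2 ^ k)%N ->
     forall i j : nat, (1 <= i <= m)%N -> (1 <= j <= m)%N ->
       freqGS (Bal k) i j = (m%:R)^-1)
  /\
  (* (3) caterpillar *)
  (forall i j : nat, (1 <= i <= m)%N -> (1 <= j <= m)%N ->
     freqGS (CP m) i j
     = (2 ^+ j)^-1 * ('C(j - 1, i - 1)%:R * (i <= j)%N%:R)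
       + (2 ^+ j)^-1 * ('C(j - 1, (i - 1) - (m - j))%:R * (m - j < i)%N%:R)).
Proof.
split; first exact: freqGS_Flat.
split; first exact: freqGS_Bal.
exact: freqGS_CP.
Qed.
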